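(* Let $X$ be a scalar random variable with samples $x$ and distribution $\pi$. Let $f:\mathbb{R}\to\mathbb{R}$ and let $Y = f(X)$, a scalar random variable with samples $y = f(x)$ and distribution $\pi_Y$, have an upper bound $u_b \in \mathbb{R}$ such that $\mathbb{P}_{\pi_Y}[Y \leq u_b] = 1$. Let $x_1,\dots,x_N$ be $N$ independent samples of $X$, set $y_k = f(x_k)$, and let $\zeta^*_N$ be the solution of $\min_{\zeta\in\mathbb{R}} \zeta$ subject to $\zeta \ge y_i$ for all $i = 1,\dots,N$ (i.e. $\zeta^*_N = \max_k f(x_k)$). Then for every $\epsilon\in[0,1]$, \[ \mathbb{P}^N_{\pi}\left[\mathbb{E}_{\pi}[f(X)] \leq \zeta^*_N(1-\epsilon) + u_b\epsilon\right] \geq 1-(1-\epsilon)^N. \]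
   Context: $\mathbb{P}^N_{\pi}$ denotes the $N$-fold product probability measure governing the i.i.d. sample $(x_1,\dots,x_N)$ drawn from $\pi$. *)

From HB Require Import structures.
From mathcomp Require Import all_boot all_order all_algebra.
From mathcomp Require Import all_classical all_reals all_analysis.
Set Implicit Arguments. Unset Strict Implicit. Unset Printing Implicit Defensive.
Import Order.TTheory GRing.Theory Num.Theory.
Local Open Scope classical_set_scope.
Local Open Scope ring_scope.

Definition iid_samples (d : measure_display) (Omega : measurableType d)
  (R : realType) (P : probability Omega R) (pi : probability R R)
  (N : nat) (X : nat -> Omega -> R) : Prop :=
  (forall i, (i < N)%N -> measurable_fun setT (X i)) /\
  (forall A : nat -> set R, (forall i, (i < N)%N -> measurable (A i)) ->
     P (\bigcap_(i in `I_N) (X i @^-1` A i)) = (\prod_(i < N) pi (A i))%E).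

(* zeta*_N = max_{k < N} y_k, the solution of min zeta s.t. zeta >= y_k
   (meaningful for N >= 1). *)
Definition zeta_star (R : realType) (N : nat) (y : nat -> R) : R :=
  \big[Num.max/y 0%N]_(k < N) y k.

From HB Require Import structures.
From mathcomp Require Import all_boot all_order all_algebra.
From mathcomp Require Import all_classical all_reals all_analysis.
From mathcomp Require Import measurable_realfun lra.
Import Order.TTheory GRing.Theory Num.Theory.
Local Open Scope classical_set_scope.
Local Open Scope ring_scope.

(* Put t := (E f - ub eps) / (1 - eps), so that the event of the theorem is
   {t <= zeta*_N}, whose complement {f x_k < t for all k} has probability
   pi(f < t)^N.  As f <= ub a.s., comparing f with s on {f <= s} and with ub
   elsewhere gives the reverse Markov bound E f <= ub - (ub - s) pi(f <= s);
   for s < t this forces pi(f <= s) <= 1 - eps, and letting s increase to t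
   gives pi(f < t) <= 1 - eps.  When eps = 1 or E f = -oo the event is sure. *)

Section sublevel.
Context {d} {T : measurableType d} {R : realType} {f : T -> R}.
Hypothesis mf : measurable_fun setT f.

Lemma measurable_sublevel_le (s : R) : measurable [set x | f x <= s].
Proof. by rewrite -preimage_itvNyc -[_ @^-1` _]setTI; exact: mf. Qed.

Lemma measurable_sublevel_lt (s : R) : measurable [set x | f x < s].
Proof. by rewrite -preimage_itvNyo -[_ @^-1` _]setTI; exact: mf. Qed.

Lemma measure_sublevel_lt_le (mu : {measure set T -> \bar R}) (t : R)
    (c : \bar R) :
  (forall s, s < t -> (mu [set x | (f x <= s)%R] <= c)%E) ->
  (mu [set x | (f x < t)%R] <= c)%E.
Proof.
move=> mu_le_c; pose F n := [set x | f x <= t - n.+1%:R^-1].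
have UF : \bigcup_n F n = [set x | f x < t].
  apply/seteqP; split => x /=.
  - by move=> [n _]; rewrite /F /= => /le_lt_trans; apply; rewrite ltrBlDr ltrDl.
  - by move/ltr_add_invr => [n] /ltW; exists n => //; rewrite /F /= lerBrDr.
have F_nd : nondecreasing_seq F.
  move=> m n mn; apply/subsetPset => x /= /le_trans; apply.
  by rewrite lerD2l lerN2 lef_pV2 ?posrE ?ltr0Sn// ler_nat ltnS.
have mF n : measurable (F n) by exact: measurable_sublevel_le.
have mUF : measurable (\bigcup_n F n) by rewrite UF; exact: measurable_sublevel_lt.
have cvgF := @nondecreasing_cvg_mu _ _ _ mu F mF mUF F_nd.
rewrite -UF -(cvg_lim _ cvgF)//; apply: lime_le; first exact: cvgP cvgF.
by apply: nearW => n; apply: mu_le_c; rewrite ltrBlDr ltrDl.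
Qed.

End sublevel.

Lemma ae_le_integral {d} {T : measurableType d} {R : realType}
    (mu : {measure set T -> \bar R}) (f g : T -> \bar R) :
  measurable_fun setT f -> measurable_fun setT g ->
  {ae mu, forall x, (f x <= g x)%E} ->
  (\int[mu]_x f x <= \int[mu]_x g x)%E.
Proof.
move=> mf mg fg; rewrite integralE [leRHS]integralE leeB//.
- apply: ae_ge0_le_integral => //; [exact: measurable_funepos..|].
  apply: filterS fg => x fgx _.
  by apply: (@funepos_le _ _ [set x]) => //; [move=> y /[!inE] -> | rewrite inE].
- apply: ae_ge0_le_integral => //; [exact: measurable_funeneg..|].
  apply: filterS fg => x fgx _.
  by apply: (@funeneg_le _ _ [set x]) => //; [move=> y /[!inE] -> | rewrite inE].
Qed.

Section reverse_markov.
Context {d} {T : measurableType d} {R : realType} (pi : probability T R).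
Local Open Scope ereal_scope.

Lemma ae_of_probability_eq1 {A : set T} :
  measurable A -> pi A = 1 -> {ae pi, forall x, A x}.
Proof.
move=> mA piA; exists (~` A); split => //; first exact: measurableC.
by rewrite probability_setC// piA subee.
Qed.

Lemma integral_cst_add_indic (A : set T) (a b : R) : measurable A ->
  \int[pi]_x (a + b * \1_A x)%:E = (a + b * fine (pi A))%:E.
Proof.
move=> mA; under eq_integral do rewrite EFinD EFinM.
rewrite integralD//; first last.
- by apply: integrableZl => //; exact: integrable_indic.
- exact: finite_measure_integrable_cst.
rewrite integralZl//; last exact: integrable_indic.
rewrite integral_indic// setIT integral_cst//.
have -> : (pi : measure T R) [set: T] = 1 := probability_setT pi.
by rewrite mule1 EFinD EFinM fineK ?fin_num_measure.
Qed.

Context {f : T -> R} {ub : R}.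
Hypotheses (mf : measurable_fun setT f) (f_le_ub : {ae pi, forall x, f x <= ub}%R).

Lemma integral_le_sublevel (s : R) :
  \int[pi]_x (f x)%:E <= (ub + (s - ub) * fine (pi [set x | f x <= s]))%:E.
Proof.
rewrite -integral_cst_add_indic; last exact: measurable_sublevel_le.
apply: ae_le_integral.
- exact/measurable_EFinP.
- apply/measurable_EFinP; apply: measurable_funD => //; apply: measurable_funM => //.
  exact/measurable_indic/measurable_sublevel_le.
apply: filterS f_le_ub => x fx_le_ub; rewrite lee_fin indicE.
have [fx_le_s|fx_gt_s] := pselect (f x <= s)%R.
  by rewrite mem_set// mulr1 addrCA subrr addr0.
by rewrite memNset// mulr0 addr0.
Qed.

Lemma integral_le_ub : \int[pi]_x (f x)%:E <= ub%:E.
Proof. by have := integral_le_sublevel ub; rewrite subrr mul0r addr0. Qed.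

Lemma probability_lt_le_of_integral_ge (t eps : R) : (eps < 1)%R ->
  (t * (1 - eps) + ub * eps)%:E <= \int[pi]_x (f x)%:E ->
  pi [set x | (f x < t)%R] <= (1 - eps)%:E.
Proof.
move=> eps_lt1 Ef_ge; apply: measure_sublevel_lt_le => // s s_lt_t.
have mA := measurable_sublevel_le mf s.
rewrite -[leLHS]fineK ?fin_num_measure// lee_fin.
have := le_trans Ef_ge integral_le_ub; rewrite lee_fin => Ef_le_ub.
have := le_trans Ef_ge (integral_le_sublevel s); rewrite lee_fin.
move: (fine _) => q Ef_le.
have t_le_ub : (t <= ub)%R by nra.
nra.
Qed.

End reverse_markov.

Lemma iid_samples_bigcap {d : measure_display} {Omega : measurableType d}
    {R : realType} {P : probability Omega R} {mu : probability R R}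
    {N : nat} {X : nat -> Omega -> R} {A : set R} :
  iid_samples P mu N X -> measurable A ->
  P (\bigcap_(i in `I_N) X i @^-1` A) = (fine (mu A) ^+ N)%:E.
Proof.
move=> [_ Pprod] mA; rewrite Pprod// -[mu A]fineK ?fin_num_measure//.
by rewrite prodEFin prodr_const card_ord.
Qed.

Lemma measurable_iid_bigcap {d : measure_display} {Omega : measurableType d}
    {R : realType} {P : probability Omega R} {mu : probability R R}
    {N : nat} {X : nat -> Omega -> R} {A : set R} :
  iid_samples P mu N X -> measurable A ->
  measurable (\bigcap_(i in `I_N) X i @^-1` A).
Proof.
move=> [mX _] mA; apply: fin_bigcap_measurable => [|i /= iN].
  exact: finite_II.
by rewrite -[_ @^-1` _]setTI; exact: mX.
Qed.

Lemma zeta_star_lt {R : realType} {N : nat} {y : nat -> R} {t : R} :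
  (0 < N)%N -> zeta_star N y < t <-> (forall k, (k < N)%N -> y k < t).
Proof.
move=> N_gt0; rewrite /zeta_star; split.
- by move/bigmax_ltP => [_ y_lt] k kN; exact: (y_lt (Ordinal kN)).
- by move=> y_lt; apply/bigmax_ltP; split => [|k _]; exact: y_lt.
Qed.

Theorem corollary1 (R : realType) (pi : probability R R) (f : R -> R)
  (ub : R) (d : measure_display) (Omega : measurableType d)
  (P : probability Omega R) (N : nat) (X : nat -> Omega -> R)
  (eps : R) :
  measurable_fun setT f ->
  pi [set x | f x <= ub] = 1%E ->
  (0 < N)%N ->
  iid_samples P pi N X ->
  0 <= eps <= 1 ->
  ((1 - (1 - eps) ^+ N)%:E <=
   P [set w | (\int[pi]_x (f x)%:E <=
               (zeta_star N (fun k => f (X k w)) * (1 - eps) + ub * eps)%:E)%E])%E.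
Proof.
move=> mf pi_f_le_ub N_gt0 iidX /andP[_ eps_le1].
have f_le_ub := ae_of_probability_eq1 pi (measurable_sublevel_le mf ub) pi_f_le_ub.
have Ef_le_ub := integral_le_ub pi mf f_le_ub.
set E := [set w | _].
have E_cases : E = setT \/ exists2 t : R, eps < 1 &
    (\int[pi]_x (f x)%:E = (t * (1 - eps) + ub * eps)%:E)%E.
  move: Ef_le_ub; case Ef: (\int[pi]_x _)%E => [r| |]// Ef_le_ub; last first.
    by left; apply/seteqP; split => // w _; rewrite /E /= Ef leNye.
  have [eps1|eps_neq1] := eqVneq eps 1.
    left; apply/seteqP; split => // w _.
    by rewrite /E /= Ef eps1 subrr mulr0 add0r mulr1.
  right; exists ((r - ub * eps) / (1 - eps)); first by rewrite lt_neqAle eps_neq1.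
  by rewrite divfK ?subrK// subr_eq0 eq_sym.
case: E_cases => [->|[t eps_lt1 Ef]].
  by rewrite probability_setT lee_fin gerBl// exprn_ge0// subr_ge0.
have eps_gt0 : 0 < 1 - eps by rewrite subr_gt0.
have mA := measurable_sublevel_lt mf t.
have -> : E = ~` \bigcap_(i in `I_N) X i @^-1` [set x | f x < t].
  rewrite predeqE => w; rewrite /E /= Ef lee_fin lerD2r ler_pM2r// leNgt.
  split => [/negP zeta_ge all_lt|not_all_lt]; first exact/zeta_ge/zeta_star_lt.
  by apply/negP => /zeta_star_lt-/(_ N_gt0); exact: not_all_lt.
have pi_lt_le : (pi [set x | (f x < t)%R] <= (1 - eps)%:E)%E.
  by apply: (probability_lt_le_of_integral_ge pi mf f_le_ub t eps eps_lt1); rewrite Ef.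
rewrite probability_setC; last exact: measurable_iid_bigcap iidX mA.
rewrite (iid_samples_bigcap iidX mA).
rewrite -EFinB lee_fin lerB// lerXn2r ?nnegrE ?fine_ge0 ?measure_ge0 ?subr_ge0//.
by rewrite -lee_fin fineK ?fin_num_measure.
Qed.
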